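(* For positive integers $n$ and $r$, let $s=(2r,3r,\ldots,nr)$ and $\mu=(r,2r,\ldots,nr)$. Then \[ d_{n-1}^s(z)+d_n^\mu(z)=\sum_{\sigma\in\mathbb{Z}_r\wr\mathfrak{S}_n:\ S_\sigma=\emptyset}z^{\mathrm{des}(\sigma)}. \]
   Context: For a sequence $t=(t_1,\ldots,t_m)$ of positive integers, $P_m^t=\{x\in\mathbb{R}^m:0\le x_1/t_1\le\cdots\le x_m/t_m\le1\}$ and $d_m^t(z)=\ell^\ast(P_m^t;z)$, where for a lattice $d$-simplex $\Delta=\mathrm{conv}(v^{(0)},\ldots,v^{(d)})\subset\mathbb{R}^m$, $\ell^\ast(\Delta;z)=\sum_{x\in\Pi^\circ_\Delta\cap\mathbb{Z}^{m+1}}z^{x_{m+1}}$, $\Pi^\circ_\Delta=\{\sum_i\lambda_i(v^{(i)},1):0<\lambda_i<1\}$. $\mathbb{Z}_r\wr\mathfrak{S}_n$ is the set of $r$-colored permutations $\sigma=\pi_1^{c_1}\cdots\pi_n^{c_n}$ ($\pi\in\mathfrak{S}_n$, $c_i\in\{0,\ldots,r-1\}$). With $\pi_{n+1}=n+1$, $c_{n+1}=0$, $i\in[n]$ is a descent if $c_i>c_{i+1}$, or $c_i=c_{i+1}$ and $\pi_i>\pi_{i+1}$; $\mathrm{des}(\sigma)$ counts descents. With conventions $\pi_0=0$, $c_0=0$, a number $i\in[n]$ is bad for $\sigma$ if, for $j$ with $\pi_j=i$: (1) $\pi_j<\pi_k$ for all $k>j$; (2) $\pi_{j-1}<\pi_k$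 for all $k>j-1$; (3) $c_j=c_{j-1}$. $S_\sigma$ is the set of bad numbers of $\sigma$. *)

From HB Require Import structures.
From mathcomp Require Import all_boot all_order all_algebra all_fingroup.
From mathcomp Require Import boolp.
Set Implicit Arguments. Unset Strict Implicit. Unset Printing Implicit Defensive.
Import Order.TTheory GRing.Theory Num.Theory.
Local Open Scope ring_scope.

(* lift a point v of Z^m to (v,1) in Z^(m+1); the last coordinate is ord_max *)
Definition lift_pt (m : nat) (v : 'I_m -> int) : 'I_m.+1 -> int :=
  fun j => match unlift ord_max j with Some j' => v j' | None => 1 end.

(* x lies in the open parallelepiped  { sum_i lam_i (v^(i),1) : 0 < lam_i < 1 }.
   (For affinely independent lattice vertices the coefficients of a lattice point
   are necessarily rational, so quantifying over rational lam is the same.) *)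
Definition in_open_pp (d m : nat) (v : 'I_d.+1 -> 'I_m -> int)
    (x : 'I_m.+1 -> int) : Prop :=
  exists lam : 'I_d.+1 -> rat,
    (forall i, 0 < lam i < 1) /\
    forall j, (x j)%:~R = \sum_(i < d.+1) lam i * (lift_pt (v i) j)%:~R.

(* Bound on the absolute value of every coordinate of a point of the open
   parallelepiped: |x_j| < sum_i |(v^(i),1)_j| <= B. *)
Definition pp_bound (d m : nat) (v : 'I_d.+1 -> 'I_m -> int) : nat :=
  (\sum_(i < d.+1) \sum_(j < m.+1) `|lift_pt (v i) j|%N)%N.

(* l^*(Delta; z) = sum over lattice points x of the open parallelepiped of
   z^(x_(m+1)); lattice points are enumerated in the box [-B, B]^(m+1),
   which contains all of them. *)
Definition lstar (d m : nat) (v : 'I_d.+1 -> 'I_m -> int) : {poly int} :=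
  let B := pp_bound v in
  \sum_(y : {ffun 'I_m.+1 -> 'I_(B.*2.+1)})
     let x := fun j => (y j)%:Z - B%:Z in
     if `[< in_open_pp v x >] then 'X^(absz (x ord_max)) else 0.

(* t is given 0-based: t_1,...,t_m are t 0, ..., t (m-1).
   P_m^t = {0 <= x_1/t_1 <= ... <= x_m/t_m <= 1} is the simplex whose vertices
   are v^(k), k = 0..m, with v^(k)_j = 0 for j <= k and t_j for j > k
   (1-based j); in 0-based coordinates: t j if k <= j, else 0. *)
Definition vertP (m : nat) (t : nat -> nat) (k : 'I_m.+1) (j : 'I_m) : int :=
  if (k <= j)%N then (t j)%:Z else 0.

Definition dpoly (m : nat) (t : nat -> nat) : {poly int} := lstar (@vertP m t).

(* sigma = (pi, c) with pi : 'S_n (values 0..n-1 standing for 1..n) and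
   c : 'I_n -> 'I_r.  1-based accessors with the paper's conventions:
   pi_0 = 0, c_0 = 0, pi_(n+1) = n+1, c_(n+1) = 0. *)

Definition piv (n : nat) (p : {perm 'I_n}) (i : nat) : nat :=
  if i == 0%N then 0%N else
  match @insub nat (fun k => (k < n)%N) 'I_n i.-1 with
  | Some k => (p k).+1 | None => n.+1 end.

Definition colv (n r : nat) (c : {ffun 'I_n -> 'I_r}) (i : nat) : nat :=
  if i == 0%N then 0%N else
  match @insub nat (fun k => (k < n)%N) 'I_n i.-1 with
  | Some k => nat_of_ord (c k) | None => 0%N end.

Definition is_descent (n r : nat) (p : {perm 'I_n}) (c : {ffun 'I_n -> 'I_r})
    (i : nat) : bool :=
  (colv c i > colv c i.+1)%N ||
  ((colv c i == colv c i.+1) && (piv p i > piv p i.+1)%N).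

Definition des (n r : nat) (p : {perm 'I_n}) (c : {ffun 'I_n -> 'I_r}) : nat :=
  count (is_descent p c) (iota 1 n).

(* i in [n] is bad: for the position j with pi_j = i,
   (1) pi_j < pi_k for all k > j, (2) pi_(j-1) < pi_k for all k > j-1,
   (3) c_j = c_(j-1).  (k ranges over positions j+1..n+1, resp. j..n+1.) *)
Definition is_bad (n r : nat) (p : {perm 'I_n}) (c : {ffun 'I_n -> 'I_r})
    (i : nat) : bool :=
  has (fun j =>
         [&& piv p j == i,
             all (fun k => (piv p j < piv p k)%N) (iota j.+1 (n.+1 - j)),
             all (fun k => (piv p j.-1 < piv p k)%N) (iota j (n.+2 - j)) &
             colv c j == colv c j.-1])
      (iota 1 n).

Definition no_bad (n r : nat) (p : {perm 'I_n}) (c : {ffun 'I_n -> 'I_r}) : bool :=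
  ~~ has (is_bad p c) (iota 1 n).

(* An integer point x lies in the open parallelepiped of P_m^t iff the sequence
   0, x_1/t_1, ..., x_m/t_m, x_(m+1) (the last term is the height) increases by
   gaps in (0,1); the gaps are its barycentric coordinates.  For t_j = (j+1)r and
   t_j = (j+2)r the denominators, read from the top, are (n-i)r for i < n, and a
   colored permutation s = (p, c) is sent to the point whose i-th scaled coordinate
   from the top is a_i + e_i/((n-i)r), with (n-i)r - e_i = c_i (n-i) + L_i, L the
   Lehmer code of p, and a_i counting the descents of s at positions >= i.
   Comparing consecutive fractional parts in mixed radix shows that a gap lies in
   (0,1) iff the corresponding number is not bad, that the integer parts drop
   exactly at descents (so the height is des s), and that the lowest gap is in
   (0,1) iff the last color is nonzero.  When the last color is 0 the lowest scaled
   coordinate vanishes instead, and dropping it gives the points of P_(n-1)^s.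
   Euclidean division and the bijectivity of the Lehmer code invert the map. *)

From mathcomp Require Import all_boot all_order all_algebra all_fingroup.
From mathcomp Require Import zify ring lra.
From mathcomp Require Import boolp.
Import Order.TTheory GRing.Theory Num.Theory.
Set Implicit Arguments. Unset Strict Implicit.

Local Open Scope ring_scope.

Definition unit_gap (x y : rat) : bool := 0 < x - y < 1.

(** * Interior lattice points of P_m^t *)

Section InteriorPoints.
Variables (m : nat) (t : nat -> nat).
Hypothesis t_gt0 : forall j, (0 < t j)%N.

Local Notation tvec := (fun j : 'I_m => (t j)%:Z).

(* [scaled_coord x k] is the paper's x_k / t_k (1-based), with x_0 / t_0 := 0 and
   t_(m+1) := 1 for the height coordinate. *)
Definition scaled_coord (x : 'I_m.+1 -> int) (k : nat) : rat :=
  if k is k'.+1 then (x (inord k'))%:~R / (lift_pt tvec (inord k'))%:~R else 0.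

Lemma lift_pt_vertP (i j : 'I_m.+1) :
  lift_pt (vertP t i) j = if (i <= j)%N then lift_pt tvec j else 0.
Proof.
by rewrite /lift_pt /vertP; case: unliftP => [k ->|->]; rewrite ?lift_max ?leq_ord.
Qed.

Lemma lift_pt_gt0 (j : 'I_m.+1) : 0 < lift_pt tvec j.
Proof. by rewrite /lift_pt; case: unlift => // k; rewrite ltz_nat t_gt0. Qed.

Lemma scaled_coord_lt x k : (k < m)%N ->
  scaled_coord x k.+1 = (x (inord k))%:~R / (t k)%:Z%:~R.
Proof.
move=> klt; rewrite /= /lift_pt (_ : inord k = lift ord_max (Ordinal klt)) ?liftK //.
have klt' : (k < m.+1)%N := ltnW klt.
by apply/eqP; rewrite -val_eqE /= inordK // /bump leqNgt klt.
Qed.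

Lemma scaled_coord_last x : scaled_coord x m.+1 = (x ord_max)%:~R.
Proof.
rewrite /= /lift_pt (_ : inord m = ord_max) ?unlift_none ?divr1 //.
by apply: val_inj; rewrite /= inordK.
Qed.

Lemma sum_ord_leq (F : 'I_m.+1 -> rat) (j : 'I_m.+1) :
  \sum_(i < m.+1 | (i <= j)%N) F i = \sum_(0 <= i < j.+1) F (inord i).
Proof.
rewrite big_mkord (big_ord_widen _ (fun i => F (inord i)) (ltn_ord j)).
by apply: eq_big => i; rewrite ?inord_val.
Qed.

Lemma in_open_ppP x :
  in_open_pp (vertP t) x <->
  (forall k, (k <= m)%N -> unit_gap (scaled_coord x k.+1) (scaled_coord x k)).
Proof.
have coordE (lam : 'I_m.+1 -> rat) (j : 'I_m.+1) :
  ((x j)%:~R == \sum_(i < m.+1) lam i * (lift_pt (vertP t i) j)%:~R)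
  = (scaled_coord x j.+1 == \sum_(0 <= i < j.+1) lam (inord i)).
  have tj : (lift_pt tvec j)%:~R != 0 :> rat by rewrite intr_eq0 gt_eqF ?lift_pt_gt0.
  rewrite /= inord_val (can2_eq (divfK tj) (mulfK tj)) -sum_ord_leq mulr_suml.
  rewrite [in RHS]big_mkcond /=; congr (_ == _); apply: eq_bigr => i _.
  by rewrite lift_pt_vertP; case: ifP; rewrite ?mulr0.
split.
- case=> lam [lam01 hx] k km.
  have partial j : (j <= m.+1)%N -> scaled_coord x j = \sum_(0 <= i < j) lam (inord i).
    case: j => [_|j hj]; first by rewrite big_mkord big_ord0.
    by move/eqP: (hx (inord j)); rewrite coordE inordK // => /eqP.
  rewrite /unit_gap !partial ?ltnS ?(leq_trans km) // big_nat_recr //= addrAC subrr add0r.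
  exact: (lam01 (inord k)).
- move=> gaps; exists (fun i : 'I_m.+1 => scaled_coord x i.+1 - scaled_coord x i).
  split=> [i|j]; first exact: gaps (leq_ord i).
  apply/eqP; rewrite coordE.
  rewrite (eq_big_nat _ _ (F2 := fun i => scaled_coord x i.+1 - scaled_coord x i)).
    by rewrite telescope_sumr // subr0.
  by move=> i /andP[_ ij]; rewrite inordK // (leq_trans ij).
Qed.

End InteriorPoints.

Lemma open_pp_coord_bound (d m : nat) (v : 'I_d.+1 -> 'I_m -> int) x :
  in_open_pp v x -> forall j, (absz (x j) <= pp_bound v)%N.
Proof.
case=> lam [lam01 hx] j.
have sum_bound : `|(x j)%:~R : rat| <= (\sum_(i < d.+1) absz (lift_pt (v i) j))%:R.
  rewrite hx natr_sum; apply: (le_trans (ler_norm_sum _ _ _)); apply: ler_sum => i _.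
  rewrite normrM natr_absz intr_norm -[X in _ <= X]mul1r ler_wpM2r //.
  by case/andP: (lam01 i) => l0 l1; rewrite ger0_norm ?ltW.
apply: (@leq_trans (\sum_(i < d.+1) absz (lift_pt (v i) j))).
  by rewrite -(ler_nat rat); apply: le_trans sum_bound; rewrite natr_absz intr_norm.
by apply: leq_sum => i _; rewrite (bigD1 j) //= leq_addr.
Qed.

Section LstarReindex.
Variables (d m : nat) (v : 'I_d.+1 -> 'I_m -> int).
Local Notation B := (pp_bound v).
Local Notation box := {ffun 'I_m.+1 -> 'I_(B.*2.+1)}.

Definition box_point (y : box) : 'I_m.+1 -> int := fun j => (y j)%:Z - B%:Z.

Definition box_index (x : 'I_m.+1 -> int) : box := [ffun j => inord (absz (x j + B%:Z))].

Lemma box_pointK : cancel box_point box_index.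
Proof.
move=> y; apply/ffunP => j; apply: val_inj; rewrite ffunE /box_point /= inordK.
  by lia.
by have := ltn_ord (y j); lia.
Qed.

Lemma box_indexK x : (forall j, absz (x j) <= B)%N -> box_point (box_index x) = x.
Proof.
move=> xB; apply: funext => j; rewrite /box_point ffunE inordK; have := xB j; lia.
Qed.

Lemma lstar_reindex (J : finType) (Q : pred J) (X : J -> 'I_m.+1 -> int)
    (dec : ('I_m.+1 -> int) -> J) :
  (forall j, Q j -> in_open_pp v (X j)) ->
  (forall j, Q j -> dec (X j) = j) ->
  (forall x, in_open_pp v x -> Q (dec x) /\ X (dec x) = x) ->
  lstar v = \sum_(j | Q j) 'X^(absz (X j ord_max)).
Proof.
move=> XQ XK decK.
have box_X j : Q j -> box_point (box_index (X j)) = X j.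
  by move=> Qj; apply/box_indexK/open_pp_coord_bound/XQ.
have -> : lstar v = \sum_(y : box | `[< in_open_pp v (box_point y) >])
                      'X^(absz (box_point y ord_max)).
  by rewrite /lstar [RHS]big_mkcond.
rewrite (reindex_onto (box_index \o X) (dec \o box_point)) /comp.
  apply: eq_big => j; last by case/andP=> /asboolP/decK[Qd _] /eqP dj; rewrite box_X // -dj.
  apply/andP/idP=> [[/asboolP/decK[Qd _] /eqP <-] //|Qj].
  by rewrite box_X // XK // eqxx; split=> //; apply/asboolP/XQ.
by move=> y /asboolP/decK[_ Xy]; rewrite Xy box_pointK.
Qed.

End LstarReindex.

(** * Lehmer codes *)

Section LehmerCode.
Variable n0 : nat.
Local Notation n := n0.+1.
Local Open Scope nat_scope.
Implicit Types (p : {perm 'I_n}) (i : nat).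

Definition lehmer p i : nat := #|[set k : 'I_n | (i < k) && (p k < p (inord i))]|.

Lemma card_ord_lt a : a <= n -> #|[pred k : 'I_n | k < a]| = a.
Proof.
move=> an; rewrite -sum1_card -(big_ord_widen _ (fun _ => 1) an).
by rewrite sum1_card card_ord.
Qed.

Lemma lehmer_lt p i : i < n -> lehmer p i < n - i.
Proof.
move=> ilt; have := cardC [pred k : 'I_n | k < i.+1].
rewrite card_ord card_ord_lt // => card_gt.
suff : lehmer p i <= n - i.+1 by lia.
rewrite -card_gt -addnBAC // subnn; apply: subset_leq_card; apply/subsetP => k.
by rewrite !inE -ltnNge => /andP[].
Qed.

Lemma lehmer_last p : lehmer p n0 = 0.
Proof. by have := lehmer_lt p (ltnSn n0); rewrite subSnn; case: (lehmer p n0). Qed.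

Lemma lehmer_descent p i : i.+1 < n ->
  (lehmer p i.+1 < lehmer p i) = (p (inord i.+1) < p (inord i)).
Proof.
move=> ilt; have ei : (inord i.+1 : 'I_n) = i.+1 :> nat by rewrite inordK.
case: (ltngtP (p (inord i.+1)) (p (inord i))) => [desc|asc|];
  last by move/val_inj/perm_inj/(congr1 (@nat_of_ord n)); rewrite ei inordK //; lia.
- apply: proper_card; apply/properP; split.
    apply/subsetP => k; rewrite !inE => /andP[ik pk].
    by rewrite (ltn_trans _ ik) //= (ltn_trans pk).
  by exists (inord i.+1); rewrite !inE ei ?ltnn //= ltnSn desc.
- apply/negbTE; rewrite -leqNgt; apply: subset_leq_card; apply/subsetP => k.
  rewrite !inE => /andP[ik pk]; rewrite (ltn_trans pk asc) andbT ltn_neqAle ik andbT.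
  apply: contraTneq pk => ki; have -> : k = inord i.+1 by apply: val_inj; rewrite /= ei.
  by rewrite -leqNgt ltnW.
Qed.

Lemma lehmer_eq0 p i : i < n ->
  (lehmer p i == 0) = [forall k : 'I_n, (i < k) ==> (p (inord i) < p k)].
Proof.
move=> ilt; rewrite cards_eq0; apply/eqP/forallP => [empty k|above].
  apply/implyP => ik; rewrite ltn_neqAle leqNgt.
  have : k \notin [set k : 'I_n | (i < k) && (p k < p (inord i))] by rewrite empty inE.
  rewrite inE ik /= => ->; rewrite andbT.
  by apply: contraTneq ik => /val_inj/perm_inj <-; rewrite inordK ?ltnn.
apply/setP => k; rewrite !inE; apply/negbTE/negP => /andP[ik pk].
by have := implyP (above k) ik; rewrite ltnNge (ltnW pk).
Qed.

Lemma lehmer_values p i :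
  lehmer p i = #|[set u : 'I_n | (i < (p^-1)%g u) && (u < p (inord i))]|.
Proof.
rewrite /lehmer -[RHS](card_preimset _ (@perm_inj _ p)); apply: eq_card => k.
by rewrite !inE permK.
Qed.

Lemma lehmer_lt_first_diff p p' i : i < n ->
  (forall k : 'I_n, k < i -> p k = p' k) ->
  p (inord i) < p' (inord i) -> lehmer p i < lehmer p' i.
Proof.
move=> ilt same_prefix lt_i.
have ei : (inord i : 'I_n) = i :> nat by rewrite inordK.
have same_tail u : (i <= (p^-1)%g u) = (i <= (p'^-1)%g u).
  have inv_eq (q q' : {perm 'I_n}) : (forall k : 'I_n, k < i -> q k = q' k) ->
      (q^-1)%g u < i -> (q'^-1)%g u = (q^-1)%g u.
    by move=> eqq lt_u; apply: (@perm_inj _ q'); rewrite permKV -eqq // permKV.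
  case: (ltnP ((p^-1)%g u) i) => [lt_p|ge_p].
    by rewrite (inv_eq _ _ same_prefix lt_p) leqNgt lt_p.
  case: (ltnP ((p'^-1)%g u) i) => // lt_p'.
  have sym : forall k : 'I_n, k < i -> p' k = p k by move=> k /same_prefix ->.
  by move: ge_p; rewrite (inv_eq _ _ sym lt_p') leqNgt lt_p'.
have not_i (u : 'I_n) : u < p' (inord i) -> (i < (p'^-1)%g u) = (i <= (p'^-1)%g u).
  move=> lt_u; rewrite [RHS]leq_eqVlt orb_idl // => /eqP ei'.
  move: lt_u; have -> : inord i = (p'^-1)%g u by apply: val_inj; rewrite /= ei.
  by rewrite permKV ltnn.
rewrite !lehmer_values; apply: proper_card; apply/properP; split.
  apply/subsetP => u; rewrite !inE => /andP[iu up]; have up' := ltn_trans up lt_i.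
  by rewrite up' not_i // -same_tail ltnW.
exists (p (inord i)); rewrite !inE ?permK ?ltnn ?andbF // lt_i not_i // andbT.
by rewrite -same_tail permK ei.
Qed.

Lemma lehmer_inj p p' : (forall i, i < n -> lehmer p i = lehmer p' i) -> p = p'.
Proof.
move=> same_code.
suff prefix i : forall k : 'I_n, k < i -> p k = p' k.
  by apply/permP => k; apply: (prefix k.+1).
elim: i => [//|i IH] k; rewrite ltnS leq_eqVlt => /orP[/eqP ki|]; last exact: IH.
have ilt : i < n by rewrite -ki.
have -> : k = inord i by apply: val_inj; rewrite /= inordK.
case: (ltngtP (p (inord i)) (p' (inord i))) => [lt_i|gt_i|/val_inj //].
  by have := lehmer_lt_first_diff ilt IH lt_i; rewrite same_code // ltnn.
have IH' : forall k : 'I_n, k < i -> p' k = p k by move=> k0 /IH ->.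
by have := lehmer_lt_first_diff ilt IH' gt_i; rewrite same_code // ltnn.
Qed.

Definition lehmer_code p : {ffun 'I_n -> 'I_n} := [ffun i : 'I_n => inord (lehmer p i)].

Definition lehmer_range (i : 'I_n) : pred 'I_n := [pred k : 'I_n | k < n - i].

Lemma lehmer_code_inj : injective lehmer_code.
Proof.
move=> p p' /ffunP same; apply: lehmer_inj => i ilt.
have := congr1 val (same (Ordinal ilt)); rewrite !ffunE /= !inordK //.
  by have := lehmer_lt p' ilt; lia.
by have := lehmer_lt p ilt; lia.
Qed.

Lemma card_lehmer_range : #|(family lehmer_range : simpl_pred _)| = n`!.
Proof.
rewrite card_family foldrE big_map big_enum /=.
rewrite (eq_bigr (fun i : 'I_n => n - i)); last by move=> i _; rewrite card_ord_lt ?leq_subr.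
rewrite (reindex_inj rev_ord_inj) /= (eq_bigr (fun i : 'I_n => i.+1)) => [|i _]; last first.
  by rewrite subKn.
by rewrite fact_prod big_add1 /= big_mkord.
Qed.

Lemma lehmer_surj (f : nat -> nat) : (forall i, i < n -> f i < n - i) ->
  exists p, forall i, i < n -> lehmer p i = f i.
Proof.
move=> f_lt.
have code_range :
    [set lehmer_code p | p in [set: {perm 'I_n}]] = [set g | g \in family lehmer_range].
  apply/eqP; rewrite eqEcard card_imset ?cardsT ?card_Sn; last exact: lehmer_code_inj.
  rewrite (eq_card (B := family lehmer_range)) => [|g]; last by rewrite inE.
  rewrite card_lehmer_range leqnn andbT; apply/subsetP => g /imsetP[p _ ->].
  rewrite inE; apply/familyP => i; rewrite ffunE inE /= inordK; first exact: lehmer_lt.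
  by have := lehmer_lt p (ltn_ord i); lia.
have : [ffun i : 'I_n => inord (f i)] \in [set g | g \in family lehmer_range].
  rewrite inE; apply/familyP => i; rewrite ffunE inE /= inordK; first exact: f_lt.
  by have := f_lt _ (ltn_ord i); lia.
rewrite -code_range => /imsetP[p _ /ffunP same]; exists p => i ilt.
have := congr1 val (same (Ordinal ilt)); rewrite !ffunE /= !inordK //.
  by have := lehmer_lt p ilt; lia.
by have := f_lt _ ilt; lia.
Qed.

End LehmerCode.

(** * Descents and bad numbers at 0-based positions *)

Section ZeroBasedStatistics.
Variables (n0 r : nat).
Local Notation n := n0.+1.
Variables (p : {perm 'I_n}) (c : {ffun 'I_n -> 'I_r}).
Local Open Scope nat_scope.

Definition pval i : nat := p (inord i).
Definition cval i : nat := c (inord i).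

Lemma piv_lt i : i < n -> piv p i.+1 = (pval i).+1.
Proof.
move=> ilt; rewrite /piv /= (insubT (fun k => k < n) ilt) /pval.
by congr (nat_of_ord (p _)).+1; apply: val_inj; rewrite /= inordK.
Qed.

Lemma piv_ge i : n <= i -> piv p i.+1 = n.+1.
Proof. by move=> ige; rewrite /piv /= insubF // ltnNge ige. Qed.

Lemma piv_gt0 k : 0 < k -> 0 < piv p k.
Proof. by rewrite /piv; case: k => // k _ /=; case: insub. Qed.

Lemma colv_lt i : i < n -> colv c i.+1 = cval i.
Proof.
move=> ilt; rewrite /colv /= (insubT (fun k => k < n) ilt) /cval.
by congr (nat_of_ord (c _)); apply: val_inj; rewrite /= inordK.
Qed.

Lemma colv_ge i : n <= i -> colv c i.+1 = 0.
Proof. by move=> ige; rewrite /colv /= insubF // ltnNge ige. Qed.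

Definition descent_at i : bool :=
  (cval i.+1 < cval i) || (cval i == cval i.+1) && (pval i.+1 < pval i).

Lemma desE : des p c = (0 < cval n0) + count descent_at (iota 0 n0).
Proof.
have last_descent : is_descent p c n = (0 < cval n0).
  rewrite /is_descent (colv_lt (i := n0)) // (colv_ge (i := n)) //.
  rewrite (piv_lt (i := n0)) // (piv_ge (i := n)) //.
  have := ltn_ord (p (inord n0)); rewrite /pval; case: (cval n0) => [|k] /=; rewrite ?orbT //; lia.
rewrite /des (_ : iota 1 n = iota 1 n0 ++ [:: n]); last by rewrite -(addn1 n0) iotaD addnC.
rewrite count_cat /= last_descent addn0 addnC.
rewrite (iotaDl 1 0) count_map; congr (_ + _); apply: eq_in_count => i.
rewrite mem_iota /= => ilt; rewrite /is_descent !colv_lt ?piv_lt //; lia.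
Qed.

(* The value at position [i] is a bad number: [lehmer p i == 0] is condition (1),
   the test at position [i - 1] is (2) and (3); for [i = 0], (2) is vacuous since
   pi_0 = 0 and (3) reads c_1 = c_0 = 0. *)
Definition bad_at i : bool :=
  (lehmer p i == 0) &&
  (if i is i'.+1 then (lehmer p i' == 0) && (cval i == cval i') else cval 0 == 0).

Lemma all_piv_gt i : i < n ->
  all (fun k => piv p i.+1 < piv p k) (iota i.+2 (n - i)) = (lehmer p i == 0).
Proof.
move=> ilt; rewrite lehmer_eq0 //; apply/allP/forallP => [above k|above k].
  apply/implyP => ik; have := above k.+1; rewrite mem_iota !piv_lt // ltnS /pval inord_val.
  by apply; have := ltn_ord k; lia.
rewrite mem_iota piv_lt // => /andP[k_gt k_lt]; case: (ltnP k n.+1) => kn.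
  rewrite -(prednK (ltn_trans _ k_gt)) // piv_lt; last by lia.
  by rewrite ltnS /pval; have := implyP (above (inord k.-1)); rewrite inordK; [apply; lia | lia].
have -> : k = n.+1 by lia.
by rewrite piv_ge // ltnS ltn_ord.
Qed.

Lemma no_badE : no_bad p c = ~~ has bad_at (iota 0 n).
Proof.
have bad_cond j : j \in iota 1 n ->
   [&& all (fun k => piv p j < piv p k) (iota j.+1 (n.+1 - j)),
       all (fun k => piv p j.-1 < piv p k) (iota j (n.+2 - j)) &
       colv c j == colv c j.-1] = bad_at j.-1.
  rewrite mem_iota => /andP[j_gt j_lt]; rewrite -(prednK j_gt).
  have ilt : j.-1 < n by lia.
  rewrite subSS all_piv_gt // colv_lt //; case: j.-1 ilt => [_|i ilt].
    have all_pos s : all (fun k => piv p 0 < piv p k) (iota 1 s).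
      by apply/allP => k; rewrite mem_iota => /andP[k_gt _]; apply: piv_gt0.
    by rewrite all_pos /= /colv.
  by rewrite colv_lt 1?ltnW //= (_ : n0.+3 - i.+2 = n - i) ?all_piv_gt 1?ltnW.
rewrite /no_bad; congr negb; apply/hasP/hasP => [[v _ /hasP[j j_in /and4P[_ j1 j2 j3]]]|].
  exists j.-1; first by move: j_in; rewrite !mem_iota; lia.
  by rewrite -bad_cond // j1 j2 j3.
case=> i i_in bad_i; exists (piv p i.+1).
  move: i_in; rewrite !mem_iota => /andP[_ ilt]; rewrite piv_lt // /pval.
  by have := ltn_ord (p (inord i)); lia.
apply/hasP; exists i.+1; first by move: i_in; rewrite !mem_iota; lia.
by rewrite eqxx /= bad_cond //; move: i_in; rewrite !mem_iota; lia.
Qed.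

End ZeroBasedStatistics.

(* Cross-multiplied comparison of C + L/(K+1) with C' + L'/K. *)
Section MixedRadix.
Local Open Scope nat_scope.
Variables (C C' L L' K : nat).
Hypotheses (K_gt0 : 0 < K) (L_le : L <= K) (L'_lt : L' < K).

Lemma mixed_radix_lt :
  ((C' * K + L') * K.+1 < (C * K.+1 + L) * K) = (C' < C) || (C == C') && (L' < L).
Proof.
case: (ltngtP C' C) => [lt_C|gt_C|<-] /=; first nia.
  by apply/negbTE; rewrite -leqNgt; nia.
by case: (ltnP L' L) => lt_L; [|apply/negbTE; rewrite -leqNgt]; nia.
Qed.

Lemma mixed_radix_eq :
  ((C * K.+1 + L) * K == (C' * K + L') * K.+1) = [&& C == C', L == 0 & L' == 0].
Proof.
case: (ltngtP C' C) => [lt_C|gt_C|<-] /=; [by apply/negbTE; nia | by apply/negbTE; nia |].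
apply/eqP/andP => [eq_w|[/eqP -> /eqP ->]]; last by rewrite !addn0 mulnAC.
by case: (ltnP L' L) => lt_L; [|split; apply/eqP]; nia.
Qed.

End MixedRadix.

Lemma unit_gap_addz (d : int) (u u' : rat) : 0 < u <= 1 -> 0 < u' <= 1 ->
  unit_gap (d%:~R + u) u' = (u != u') && (d == if u < u' then 1 else 0).
Proof.
move=> /andP[u_gt0 u_le1] /andP[u'_gt0 u'_le1]; rewrite /unit_gap -addrA.
have [->|[->|d_out]] : d = 0 \/ d = 1 \/ (d <= -1 \/ 2 <= d) by lia.
- rewrite add0r; have [lt_u|gt_u|->] := ltgtP u u'.
  + by apply/negbTE/negP => /andP[]; lra.
  + by apply/andP; split; lra.
  + by rewrite subrr ltxx.
- have [lt_u|gt_u|->] := ltgtP u u'.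
  + by apply/andP; split; lra.
  + by apply/negbTE/negP => /andP[]; lra.
  + by rewrite subrr addr0 ltxx andbF.
have -> : (d == if u < u' then 1 else 0) = false by case: ifP => _; apply/eqP; lia.
rewrite andbF; apply/negP => /andP[gap_gt0 gap_lt1].
case: d_out => [d_le|d_ge].
  have : (d%:~R : rat) <= -1 by rewrite (ler_int rat d (-1)).
  lra.
have : (2 : rat) <= d%:~R by rewrite (ler_int rat 2 d).
lra.
Qed.

Lemma unit_gap_frac (a a' E E' t t' : int) : 0 < E <= t -> 0 < E' <= t' ->
  unit_gap (a%:~R + E%:~R / t%:~R) (a'%:~R + E'%:~R / t'%:~R) =
  (E * t' != E' * t) && (a - a' == if E * t' < E' * t then 1 else 0).
Proof.
move=> E_bounds E'_bounds.
have t_gt0 : (0 : rat) < t%:~R by rewrite ltr0z; lia.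
have t'_gt0 : (0 : rat) < t'%:~R by rewrite ltr0z; lia.
have frac01 (e s : int) : 0 < e <= s -> 0 < (e%:~R / s%:~R : rat) <= 1.
  move=> /andP[e_gt0 e_le]; have s_gt0 : 0 < s by lia.
  by rewrite divr_gt0 ?ltr0z //= ler_pdivrMr ?ltr0z // mul1r ler_int.
have -> : unit_gap (a%:~R + E%:~R / t%:~R) (a'%:~R + E'%:~R / t'%:~R)
        = unit_gap ((a - a')%:~R + E%:~R / t%:~R) (E'%:~R / t'%:~R).
  rewrite /unit_gap; have -> // : a%:~R + E%:~R / t%:~R - (a'%:~R + E'%:~R / t'%:~R)
             = (a - a')%:~R + E%:~R / t%:~R - E'%:~R / t'%:~R :> rat.
  by rewrite intrB; ring.
rewrite unit_gap_addz ?frac01 // eqr_div ?lt0r_neq0 // -!intrM eqr_int.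
by rewrite ltr_pdivrMr // mulrAC ltr_pdivlMr // -!intrM ltr_int.
Qed.

(** * The chain of scaled coordinates of a colored permutation *)

(* [coord p c i / den i] is [coord_int p c i + coord_frac p c i / den i] with
   [0 < coord_frac p c i <= den i]: [den i - coord_frac p c i] is the mixed-radix
   digit [c_i (n - i) + lehmer p i < den i], and [coord_int p c i] counts the
   descents at positions [>= i], shifted by [-1] unless the last color is nonzero.
   [chain h xv] lists the height [h], the ratios [xv i / den i] for [i < n], then 0. *)
Section Encoding.
Variables n0 r0 : nat.
Local Notation n := n0.+1.
Local Notation r := r0.+1.
Implicit Types (p : {perm 'I_n}) (c : {ffun 'I_n -> 'I_r}) (a : nat -> int).

Definition den (i : nat) : nat := ((n - i) * r)%N.

Definition digit p c (i : nat) : nat := (cval c i * (n - i) + lehmer p i)%N.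

Definition coord_frac p c (i : nat) : int := (den i)%:Z - (digit p c i)%:Z.

Definition coord_of_int p c a (i : nat) : int := (den i)%:Z * a i + coord_frac p c i.

Definition coord_int p c (i : nat) : int :=
  (if (0 < cval c n0)%N then 1 else 0) - 1 + (count (descent_at p c) (iota i (n0 - i)))%:Z.

Definition coord p c : nat -> int := coord_of_int p c (coord_int p c).

Definition chain (h : int) (xv : nat -> int) (q : nat) : rat :=
  if q is i.+1 then if (i < n)%N then (xv i)%:~R / ((den i)%:Z)%:~R else 0
  else h%:~R.

Lemma den_gt0 i : (i < n)%N -> (0 < den i)%N.
Proof. by move=> ilt; rewrite /den muln_gt0 subn_gt0 ilt. Qed.

Lemma digit_lt p c i : (i < n)%N -> (digit p c i < den i)%N.
Proof.
move=> ilt; have := lehmer_lt p ilt; have := ltn_ord (c (inord i)).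
rewrite /digit /den /cval; move: (c _ : nat) (lehmer p i) => C L C_lt L_lt.
nia.
Qed.

Lemma coord_frac_bounds p c i : (i < n)%N -> 0 < coord_frac p c i <= (den i)%:Z.
Proof. by move=> /(digit_lt p c); rewrite /coord_frac; lia. Qed.

Lemma coord_int_succ p c i : (i < n0)%N ->
  coord_int p c i = coord_int p c i.+1 + (if descent_at p c i then 1 else 0).
Proof.
move=> ilt; rewrite /coord_int (_ : n0 - i = (n0 - i.+1).+1)%N; last by lia.
by rewrite /= -addn1 PoszD; case: (descent_at p c i) => /=; lia.
Qed.

Lemma coord_int_last p c : coord_int p c n0 = (if (0 < cval c n0)%N then 1 else 0) - 1.
Proof. by rewrite /coord_int subnn addr0. Qed.

Lemma des_coord_int p c : (des p c)%:Z = coord_int p c 0 + 1.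
Proof. by rewrite desE /coord_int subn0 PoszD; case: (0 < cval c n0)%N => /=; lia. Qed.

Lemma intr_mulD_div (a E t : int) : t != 0 ->
  ((t * a + E)%:~R / t%:~R : rat) = a%:~R + E%:~R / t%:~R.
Proof.
by move=> t_neq0; rewrite intrD intrM mulrDl mulrAC mulfV ?mul1r // intr_eq0.
Qed.

Lemma chain_coord_of_int h p c a i : (i < n)%N ->
  chain h (coord_of_int p c a) i.+1 = (a i)%:~R + (coord_frac p c i)%:~R / ((den i)%:Z)%:~R.
Proof.
by move=> ilt; rewrite /chain ilt intr_mulD_div // eqz_nat -lt0n den_gt0.
Qed.

Lemma coord_frac_cross p c i : (i.+1 < n)%N ->
  coord_frac p c i * (den i.+1)%:Z - coord_frac p c i.+1 * (den i)%:Z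
  = r%:Z * ((digit p c i.+1 * (n - i.+1).+1)%N%:Z - (digit p c i * (n - i.+1))%N%:Z).
Proof.
move=> ilt; rewrite /coord_frac /den (_ : n - i = (n - i.+1).+1)%N; last by lia.
by rewrite !PoszM; ring.
Qed.

Lemma digit_mixed_radix p c i : (i.+1 < n)%N ->
  [/\ digit p c i = (cval c i * (n - i.+1).+1 + lehmer p i)%N,
      digit p c i.+1 = (cval c i.+1 * (n - i.+1) + lehmer p i.+1)%N,
      (0 < n - i.+1)%N, (lehmer p i <= n - i.+1)%N & (lehmer p i.+1 < n - i.+1)%N].
Proof.
move=> ilt; have := lehmer_lt p (ltnW ilt); have := lehmer_lt p ilt.
by rewrite /digit (_ : n - i = (n - i.+1).+1)%N; [split=> //; lia | lia].
Qed.

Lemma coord_frac_eq p c i : (i.+1 < n)%N ->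
  (coord_frac p c i * (den i.+1)%:Z == coord_frac p c i.+1 * (den i)%:Z) = bad_at p c i.+1.
Proof.
move=> ilt; rewrite -subr_eq0 coord_frac_cross // mulf_eq0 /= subr_eq0 eqz_nat eq_sym.
have [-> -> K_gt0 L_le L'_lt] := digit_mixed_radix p c ilt.
rewrite mixed_radix_eq // /bad_at eq_sym.
by case: (_ == _); case: (_ == _); case: (_ == _).
Qed.

Lemma coord_frac_lt p c i : (i.+1 < n)%N ->
  (coord_frac p c i * (den i.+1)%:Z < coord_frac p c i.+1 * (den i)%:Z) = descent_at p c i.
Proof.
move=> ilt; rewrite -subr_lt0 coord_frac_cross // pmulr_rlt0 // subr_lt0 ltz_nat.
have [-> -> K_gt0 L_le L'_lt] := digit_mixed_radix p c ilt.
by rewrite mixed_radix_lt // /descent_at lehmer_descent.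
Qed.

Lemma chain_gap_first h p c a :
  unit_gap (chain h (coord_of_int p c a) 0) (chain h (coord_of_int p c a) 1)
  = ~~ bad_at p c 0 && (h == a 0%N + 1).
Proof.
have F_bounds := coord_frac_bounds p c (ltn0Sn n0).
rewrite chain_coord_of_int // (_ : chain _ _ 0 = (h - 1)%:~R + (1 : int)%:~R / (1 : int)%:~R).
  rewrite unit_gap_frac //.
  rewrite mul1r mulr1 ltNge (andP F_bounds).2 /= subr_eq0 subr_eq.
  rewrite /coord_frac /bad_at /digit subn0; congr (_ && _).
  by case: lehmer => [|L]; case: cval => [|C]; rewrite /=; lia.
by rewrite /chain divr1 -intrD subrK.
Qed.

Lemma chain_gap_mid h p c a i : (i.+1 < n)%N ->
  unit_gap (chain h (coord_of_int p c a) i.+1) (chain h (coord_of_int p c a) i.+2)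
  = ~~ bad_at p c i.+1 && (a i == a i.+1 + if descent_at p c i then 1 else 0).
Proof.
move=> ilt; have ilt' := ltnW ilt.
rewrite !chain_coord_of_int // unit_gap_frac ?coord_frac_bounds //.
by rewrite coord_frac_eq // coord_frac_lt // subr_eq addrC.
Qed.

Lemma chain_gap_last h p c a :
  unit_gap (chain h (coord_of_int p c a) n) (chain h (coord_of_int p c a) n.+1)
  = (0 < cval c n0)%N && (a n0 == 0).
Proof.
rewrite chain_coord_of_int // (_ : chain _ _ n.+1 = (-1)%:~R + (1 : int)%:~R / (1 : int)%:~R).
  rewrite unit_gap_frac ?coord_frac_bounds // mul1r mulr1 /coord_frac /digit lehmer_last.
  rewrite subSnn muln1 addn0; case: posnP => [->|C_gt0]; first by rewrite subr0 eqxx.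
  have -> : ((den n0)%:Z - (cval c n0)%:Z < (den n0)%:Z) by lia.
  by rewrite /=; apply/andP/eqP => [[_ /eqP]|->]; lia.
by rewrite /chain ltnn divr1; ring.
Qed.

Lemma coord_last_eq0 p c : (coord p c n0 == 0) = (cval c n0 == 0%N).
Proof.
rewrite /coord /coord_of_int coord_int_last /coord_frac /digit lehmer_last /den subSnn.
by case: posnP => [->|C_gt0] /=; have := ltn_ord (c (inord n0)); rewrite /cval; lia.
Qed.

Lemma chain_coord_gap p c q : (q <= n)%N ->
  unit_gap (chain (des p c) (coord p c) q) (chain (des p c) (coord p c) q.+1)
  = if q == n then (0 < cval c n0)%N else ~~ bad_at p c q.
Proof.
case: q => [_|i]; first by rewrite chain_gap_first des_coord_int eqxx andbT.
rewrite ltnS leq_eqVlt => /orP[/eqP ->|ilt].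
  by rewrite eqxx chain_gap_last coord_int_last; case: posnP.
by rewrite chain_gap_mid // coord_int_succ // eqxx andbT ltn_eqF.
Qed.

Definition dec_digit (xv : nat -> int) (i : nat) : nat :=
  absz ((- xv i) %% (den i)%:Z)%Z.

Definition dec_int (xv : nat -> int) (i : nat) : int := - ((- xv i) %/ (den i)%:Z)%Z - 1.

Definition decode_col (xv : nat -> int) : {ffun 'I_n -> 'I_r} :=
  [ffun i : 'I_n => inord (dec_digit xv i %/ (n - i))%N].

(* The default [1] is never used, by [lehmer_surj]. *)
Definition decode_perm (xv : nat -> int) : {perm 'I_n} :=
  odflt 1%g [pick p : {perm 'I_n} |
               [forall i : 'I_n, lehmer p i == (dec_digit xv i %% (n - i))%N]].

Lemma dec_digit_lt xv i : (i < n)%N -> (dec_digit xv i < den i)%N.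
Proof.
move=> /den_gt0 den_pos; rewrite /dec_digit.
have : 0 <= ((- xv i) %% (den i)%:Z)%Z by apply: modz_ge0; lia.
have : ((- xv i) %% (den i)%:Z)%Z < (den i)%:Z by apply: ltz_pmod; lia.
lia.
Qed.

Lemma dec_int_repr xv i : (i < n)%N ->
  xv i = (den i)%:Z * dec_int xv i + ((den i)%:Z - (dec_digit xv i)%:Z).
Proof.
move=> /den_gt0 den_pos; rewrite /dec_int /dec_digit abszE ger0_norm.
  by rewrite -{1}(opprK (xv i)) {1}(divz_eq (- xv i) (den i)%:Z); ring.
by apply: modz_ge0; lia.
Qed.

Lemma cval_decode_col xv i : (i < n)%N ->
  cval (decode_col xv) i = (dec_digit xv i %/ (n - i))%N.
Proof.
move=> ilt; rewrite /cval ffunE !inordK // ltn_divLR ?subn_gt0 // mulnC.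
exact: dec_digit_lt.
Qed.

Lemma lehmer_decode_perm xv i : (i < n)%N ->
  lehmer (decode_perm xv) i = (dec_digit xv i %% (n - i))%N.
Proof.
move=> ilt; have [p0 p0_code] : exists p0, forall i, (i < n)%N ->
    lehmer p0 i = (dec_digit xv i %% (n - i))%N.
  by apply: lehmer_surj => k klt; rewrite ltn_mod subn_gt0.
rewrite /decode_perm; case: pickP => [p /forallP code_p | no_p] /=.
  exact/eqP/(code_p (Ordinal ilt)).
by case/forallP: (no_p p0) => k; rewrite p0_code.
Qed.

Lemma digit_decode xv i : (i < n)%N ->
  digit (decode_perm xv) (decode_col xv) i = dec_digit xv i.
Proof. by move=> ilt; rewrite /digit cval_decode_col // lehmer_decode_perm // -divn_eq. Qed.

Lemma coord_of_int_decode xv i : (i < n)%N ->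
  xv i = coord_of_int (decode_perm xv) (decode_col xv) (dec_int xv) i.
Proof. by move=> ilt; rewrite /coord_of_int /coord_frac digit_decode // -dec_int_repr. Qed.

Lemma dec_digit_coord_of_int p c a i : (i < n)%N ->
  dec_digit (coord_of_int p c a) i = digit p c i.
Proof.
move=> ilt; rewrite /dec_digit /coord_of_int /coord_frac.
have -> : - ((den i)%:Z * a i + ((den i)%:Z - (digit p c i)%:Z))
          = (- a i - 1) * (den i)%:Z + (digit p c i)%:Z by ring.
by rewrite modzMDl modz_small //; have := digit_lt p c ilt; lia.
Qed.

Lemma decode_coord_of_int p c a xv :
  (forall i, (i < n)%N -> xv i = coord_of_int p c a i) ->
  decode_perm xv = p /\ decode_col xv = c.
Proof.
move=> xvE; have digitE i : (i < n)%N -> dec_digit xv i = digit p c i.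
  by move=> ilt; rewrite /dec_digit xvE // -/(dec_digit _ i) dec_digit_coord_of_int.
split.
  apply: lehmer_inj => i ilt; rewrite lehmer_decode_perm // digitE // /digit.
  by rewrite modnMDl modn_small // lehmer_lt.
apply/ffunP => i; apply: val_inj; rewrite ffunE /= digitE // /digit divnMDl ?subn_gt0 //.
by rewrite divn_small ?addn0 ?lehmer_lt // /cval inordK ?inord_val.
Qed.

Lemma eq_chain h xv xv' :
  (forall i, (i < n)%N -> xv i = xv' i) -> chain h xv =1 chain h xv'.
Proof. by move=> xvE [|i] //=; case: ifP => // /xvE ->. Qed.

Lemma decode_chain h xv :
  (forall q, (q < n)%N -> unit_gap (chain h xv q) (chain h xv q.+1)) ->
  unit_gap (chain h xv n) (chain h xv n.+1) \/ xv n0 = 0 ->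
  (forall i, (i < n)%N -> xv i = coord (decode_perm xv) (decode_col xv) i) /\
  h = des (decode_perm xv) (decode_col xv).
Proof.
move=> gaps last_gap.
have decode_xv0 : xv n0 = 0 -> cval (decode_col xv) n0 = 0%N /\ dec_int xv n0 = -1.
  move=> xv0; have digit0 : dec_digit xv n0 = 0%N by rewrite /dec_digit xv0 oppr0 mod0z.
  by rewrite cval_decode_col // digit0 div0n /dec_int xv0 oppr0 div0z.
move: (decode_perm xv) (decode_col xv) (dec_int xv) (coord_of_int_decode xv) decode_xv0.
move=> p c a xvE decode_xv0; have chainE := eq_chain h xvE.
have a_last : a n0 = coord_int p c n0.
  rewrite coord_int_last; case: last_gap => [|/decode_xv0[-> ->] //].
  by rewrite !chainE chain_gap_last => /andP[-> /eqP ->].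
have aE i : (i < n)%N -> a i = coord_int p c i.
  rewrite ltnS => ile; rewrite -(subKn ile).
  elim: (n0 - i)%N (leq_subr i n0) => [|k IH k_lt]; first by rewrite subn0.
  have ilt : ((n0 - k.+1).+1 < n)%N by lia.
  have := gaps _ ilt; rewrite !chainE chain_gap_mid // => /andP[_ /eqP ->].
  rewrite coord_int_succ; last lia.
  by rewrite (_ : (n0 - k.+1).+1 = n0 - k)%N ?IH 1?ltnW //; lia.
split=> [i ilt|]; first by rewrite xvE // /coord /coord_of_int aE.
have := gaps 0%N (ltn0Sn _); rewrite !chainE chain_gap_first => /andP[_ /eqP ->].
by rewrite des_coord_int aE.
Qed.

End Encoding.

(** * The simplices P_(n-1)^s and P_n^mu *)

Section ColoredSimplex.
Variables (n0 r0 m : nat) (t : nat -> nat).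
Local Notation n := n0.+1.
Local Notation r := r0.+1.
Hypotheses (m_ge : (n0 <= m)%N) (m_le : (m <= n)%N).
Hypothesis tE : forall j, (t j = ((n - m).+1 + j) * r)%N.
Implicit Types (p : {perm 'I_n}) (c : {ffun 'I_n -> 'I_r}) (x : 'I_m.+1 -> int).

(* Coordinate [j < m] sits at chain position [m - 1 - j], where [t j = den (m - 1 - j)];
   for [m = n - 1] the position [n - 1] is padded with 0. *)
Definition rev_coords x (i : nat) : int := if (i < m)%N then x (inord (m.-1 - i)) else 0.

Local Notation xchain x := (chain n0 r0 (x%function ord_max) (rev_coords x)).

Lemma scaled_coord_chain x k : (k <= m.+1)%N -> scaled_coord t x k = xchain x (m.+1 - k).
Proof.
case: k => [_|k]; first by rewrite subn0 /= /rev_coords ltnn; case: ifP => // _; rewrite mul0r.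
rewrite ltnS leq_eqVlt => /orP[/eqP ->|klt]; first by rewrite scaled_coord_last subnn.
rewrite scaled_coord_lt // subSS (_ : m - k = (m.-1 - k).+1)%N; last by lia.
rewrite /chain ifT; last by lia.
rewrite /rev_coords ifT; last by lia.
rewrite tE /den; congr (_ / _%:~R); first by congr (x _)%:~R; congr inord; lia.
by congr Posz; congr (_ * _)%N; lia.
Qed.

Lemma scaled_coord_rev x q : (q <= m.+1)%N -> scaled_coord t x (m.+1 - q) = xchain x q.
Proof. by move=> qle; rewrite scaled_coord_chain ?leq_subr // subKn. Qed.

Lemma in_open_pp_chain x :
  in_open_pp (vertP t) x <-> (forall q, (q <= m)%N -> unit_gap (xchain x q) (xchain x q.+1)).
Proof.
have t_gt0 j : (0 < t j)%N by rewrite tE muln_gt0.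
rewrite in_open_ppP //; split=> gaps k kle; have := gaps (m - k)%N (leq_subr _ _).
  by rewrite -subSn // -[(m - k)%N]subSS !scaled_coord_rev // leqW.
have sub_le := leq_subr k m.
by rewrite -!scaled_coord_rev ?subSS ?subSn ?subKn // leqW.
Qed.

Definition colored_point p c : 'I_m.+1 -> int :=
  fun j => if (j : nat) == m then (des p c)%:Z else coord p c (m.-1 - j).

Definition decode_point x := (decode_perm n0 r0 (rev_coords x), decode_col n0 r0 (rev_coords x)).

Definition admissible (pc : {perm 'I_n} * {ffun 'I_n -> 'I_r}) : bool :=
  no_bad pc.1 pc.2 && ((m == n) == (0 < cval pc.2 n0)%N).

Lemma rev_coords_colored_point p c i : (i < n)%N -> (m == n) = (0 < cval c n0)%N ->
  rev_coords (colored_point p c) i = coord p c i.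
Proof.
move=> ilt m_cval; rewrite /rev_coords /colored_point; case: ltnP => im.
  have pos_lt : (m.-1 - i < m.+1)%N by lia.
  rewrite inordK // ifF; last by lia.
  by congr coord; lia.
have [-> m_n0] : i = n0 /\ m = n0 by lia.
by apply/esym/eqP; rewrite coord_last_eq0 -leqn0 leqNgt -m_cval m_n0 ltn_eqF.
Qed.

Lemma colored_point_interior p c :
  admissible (p, c) -> in_open_pp (vertP t) (colored_point p c).
Proof.
case/andP=> /= nb /eqP m_cval; apply/in_open_pp_chain => q qle.
have xvE := eq_chain r0 (des p c) (fun i ilt => rev_coords_colored_point p ilt m_cval).
have -> : colored_point p c ord_max = des p c by rewrite /colored_point eqxx.
rewrite !xvE chain_coord_gap; last lia.
case: eqP => [qn|/eqP qn]; first by rewrite -m_cval; lia.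
by move: nb; rewrite no_badE => /hasPn; apply; rewrite mem_iota; lia.
Qed.

Lemma decode_colored_point p c : admissible (p, c) -> decode_point (colored_point p c) = (p, c).
Proof.
case/andP=> /= _ /eqP m_cval; rewrite /decode_point.
by have [-> ->] := decode_coord_of_int (fun i ilt => rev_coords_colored_point p ilt m_cval).
Qed.

Lemma interior_colored_point x : in_open_pp (vertP t) x ->
  admissible (decode_point x) /\ colored_point (decode_point x).1 (decode_point x).2 = x.
Proof.
move/in_open_pp_chain => gaps.
have last_gap : unit_gap (xchain x n) (xchain x n.+1) \/ rev_coords x n0 = 0.
  have [mlt|mn] : (m < n)%N \/ m = n by lia.
    by right; rewrite /rev_coords ifF //; lia.
  by left; apply: gaps; rewrite mn.
have low_gaps q : (q < n)%N -> unit_gap (xchain x q) (xchain x q.+1).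
  by move=> qlt; apply: gaps (leq_trans (ltnSE qlt) m_ge).
have [xvE desE] := decode_chain low_gaps last_gap.
rewrite /decode_point; move: (decode_perm _ _ _) (decode_col _ _ _) xvE desE => p c xvE desE.
have chainE : xchain x =1 chain n0 r0 (des p c) (coord p c).
  by rewrite desE; apply: eq_chain.
split; first apply/andP; first split.
- rewrite no_badE; apply/hasPn => q; rewrite mem_iota => /andP[_ qlt].
  by have := low_gaps q qlt; rewrite !chainE chain_coord_gap ?ltn_eqF // ltnW.
- have [mlt|mn] : (m < n)%N \/ m = n by lia.
    rewrite ltn_eqF // eq_sym eqbF_neg -leqNgt leqn0 -(coord_last_eq0 p) -xvE //.
    by rewrite /rev_coords ifF //; lia.
  have := gaps n (eq_leq (esym mn)); rewrite !chainE chain_coord_gap // eqxx => ->.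
  by rewrite mn eqxx.
apply: funext => j; rewrite /colored_point; case: eqP => [jm|jm].
  by rewrite -desE; congr x; apply: val_inj; rewrite /= jm.
have jlt : (j < m)%N by have := ltn_ord j; lia.
rewrite -xvE; last lia.
rewrite /rev_coords ifT; last lia.
by congr x; apply: val_inj; rewrite /= inordK; lia.
Qed.

Lemma dpoly_colored_simplex : dpoly m t = \sum_(pc | admissible pc) 'X^(des pc.1 pc.2).
Proof.
rewrite /dpoly (@lstar_reindex _ _ _ _ admissible (fun pc => colored_point pc.1 pc.2) decode_point).
- by apply: eq_bigr => pc _; rewrite /colored_point eqxx.
- by move=> [p c]; apply: colored_point_interior.
- by move=> [p c]; apply: decode_colored_point.
- exact: interior_colored_point.
Qed.

End ColoredSimplex.

Theorem lemma4p11 (n r : nat) (hn : (0 < n)%N) (hr : (0 < r)%N) :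
  dpoly (n.-1) (fun j => ((j + 2) * r)%N) + dpoly n (fun j => ((j + 1) * r)%N)
  = \sum_(p : {perm 'I_n}) \sum_(c : {ffun 'I_n -> 'I_r} | no_bad p c)
        'X^(des p c).
Proof.
case: n hn => // n0 _; case: r hr => // r0 _.
rewrite (@dpoly_colored_simplex n0 r0 n0) ?leqnSn // => [|j]; last by rewrite subSnn addnC.
rewrite (@dpoly_colored_simplex n0 r0 n0.+1) ?leqnSn // => [|j]; last by rewrite subnn addnC.
rewrite pair_big_dep [RHS](bigID (fun pc => 0 < cval pc.2 n0)%N) [RHS]addrC /=.
congr (_ + _); apply: eq_bigl => pc; rewrite /admissible.
  by rewrite ltn_eqF // eq_sym eqbF_neg.
by rewrite eqxx.
Qed.
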